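(* Let $n\ge 2$ and let $H$ be a graph with vertex set $[n]$. If $H$ is Henneberg, then there exists a pair of rooted binary trees $T_1,T_2$ on leaf set $[n]$ such that the restricted clade graph $G^H_{T_1,T_2}$ is a tree.
   Context: A graph is Henneberg if it is the complete graph $K_2$, or it can be obtained from a smaller Henneberg graph by one of the Henneberg moves: (i) adding a new vertex adjacent to two existing vertices; (ii) removing an existing edge $ij$ and adding a new vertex adjacent to $i$, $j$ and one other existing vertex (graphs are considered up to relabeling of vertices). A rooted binary tree on leaf set $[n]$ has leaves labeled bijectively by $[n]$ and each internal vertex has exactly two children. A clade is the set of leaves below an internal vertex; $\mathrm{clade}(T)$ is the set of clades (including $[n]$); $c_T(S)$ is the smallest clade of $T$ containing $S\subseteq[n]$. The restricted clade graph $G^H_{T_1,T_2}$ is the bipartite multigraph with vertex set the disjoint union of $\mathrm{clade}(T_1)$ and $\mathrm{clade}(T_2)$, having for each edge $ij$ of $H$ an edge $e_{ij}$ joining $c_{T_1}(\{i,j\})$ to $c_{T_2}(\{i,j\})$. *)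

From mathcomp Require Import all_boot fingroup perm.
Set Implicit Arguments. Unset Strict Implicit. Unset Printing Implicit Defensive.

(* A graph on vertex set [n] = 'I_n is given by its edge set, a set of
   2-element subsets of 'I_n. *)

(* embedding of the old vertices into 'I_n.+1; the new vertex is ord_max *)
Definition emb n (i : 'I_n) : 'I_n.+1 := widen_ord (leqnSn n) i.

Definition lift_edges n (E : {set {set 'I_n}}) : {set {set 'I_n.+1}} :=
  [set [set emb x | x in (e : {set 'I_n})] | e in E].

Inductive henneberg : forall n : nat, {set {set 'I_n}} -> Prop :=
| henK2 : henneberg [set [set (ord0 : 'I_2); ord_max]]
| henRelabel n (E : {set {set 'I_n}}) (s : {perm 'I_n}) :
    henneberg E -> henneberg [set [set s x | x in (e : {set 'I_n})] | e in E]
| henMove1 n (E : {set {set 'I_n}}) (i j : 'I_n) :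
    henneberg E -> i != j ->
    henneberg (lift_edges E :|: [set [set ord_max; emb i]; [set ord_max; emb j]])
| henMove2 n (E : {set {set 'I_n}}) (i j k : 'I_n) :
    henneberg E -> [set i; j] \in E -> k != i -> k != j ->
    henneberg (lift_edges (E :\ [set i; j]) :|:
               [set [set ord_max; emb i]; [set ord_max; emb j]; [set ord_max; emb k]]).

Inductive btree (n : nat) : Type :=
| BLeaf of 'I_n
| BNode of btree n & btree n.

Fixpoint leaves n (t : btree n) : seq 'I_n :=
  match t with
  | BLeaf i => [:: i]
  | BNode l r => leaves l ++ leaves r
  end.

Definition on_leafset n (t : btree n) : Prop := perm_eq (leaves t) (enum 'I_n).

Fixpoint clades n (t : btree n) : {set {set 'I_n}} :=
  match t with
  | BLeaf _ => set0
  | BNode l r => [set [set x in leaves t]] :|: clades l :|: clades r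
  end.

(* smallest clade of t containing S (setT is an unused default) *)
Definition cT n (t : btree n) (S : {set 'I_n}) : {set 'I_n} :=
  odflt setT [pick C in clades t |
     (S \subset C) && [forall D in clades t, (S \subset D) ==> (C \subset D)]].

Section Multigraph.
Variables (V Ed : finType) (Vs : {set V}) (Es : {set Ed}) (ends : Ed -> V * V).

Definition joins (e : Ed) (u v : V) : bool :=
  (ends e == (u, v)) || (ends e == (v, u)).

Definition adj : rel V := fun u v => [exists e in Es, joins e u v].

Definition mg_connected : Prop :=
  forall u v, u \in Vs -> v \in Vs -> connect adj u v.

(* a cycle: distinct vertices v_0..v_{k-1}, distinct edges e_0..e_{k-1},
   k >= 1, e_i joining v_i and v_{i+1 mod k} (parallel edges form a cycle) *)
Definition mg_cycle (es : seq Ed) (vs : seq V) : Prop :=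
  [/\ [&& 0 < size es, size es == size vs, uniq es & uniq vs],
      all (mem Es) es, all (mem Vs) vs &
      forall (i : nat) (e0 : Ed) (v0 : V), i < size es ->
        joins (nth e0 es i) (nth v0 vs i) (nth v0 vs (i.+1 %% size vs))].

Definition mg_acyclic : Prop := forall es vs, ~ mg_cycle es vs.

Definition mg_tree : Prop := [/\ Vs != set0, mg_connected & mg_acyclic].
End Multigraph.

(* the restricted clade graph G^H_{T1,T2}: vertices clade(T1) ⊔ clade(T2),
   one edge e_ij for each edge {i,j} of H *)
Definition clade_vertices n (t1 t2 : btree n) : {set {set 'I_n} + {set 'I_n}} :=
  [set inl C | C in clades t1] :|: [set inr C | C in clades t2].

Definition clade_ends n (t1 t2 : btree n) (e : {set 'I_n}) :
  ({set 'I_n} + {set 'I_n}) * ({set 'I_n} + {set 'I_n}) :=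
  (inl (cT t1 e), inr (cT t2 e)).

Definition restricted_clade_graph_is_tree n (H : {set {set 'I_n}}) (t1 t2 : btree n) : Prop :=
  mg_tree (clade_vertices t1 t2) H (clade_ends t1 t2).

From mathcomp Require Import all_boot fingroup perm.
Set Implicit Arguments. Unset Strict Implicit. Unset Printing Implicit Defensive.

(* Induction along the Henneberg construction, keeping a pair of trees whose
   restricted clade graph is a tree.  The new vertex is inserted into T1 as
   the sibling of a leaf x and into T2 as the sibling of a leaf y.  The clades
   of the new trees are the preimages of the old clades under the map
   collapsing the new leaf onto x (resp. y), plus one new cherry per tree, so
   the old clade graph embeds in the new one and the new edges to x and to y
   hang the two cherries on it as pendant vertices.  For a move of type (ii),
   deleting e_ij cuts the old clade tree into the component of c_T1(ij) and
   that of c_T2(ij); choosing x, y and the third neighbour w among i, j, k so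
   that c_T1(x,w) and c_T2(y,w) lie on opposite sides, the new edge to w
   reconnects the two components. *)

(** * Trees in finite multigraphs *)

Section MultigraphTrees.
Variables (V Ed : finType) (ends : Ed -> V * V).
Implicit Types (Vs : {set V}) (Es : {set Ed}) (e g h : Ed) (a b c d u w z : V).

Local Notation joins := (joins ends).
Local Notation adj Es := (adj Es ends).
Local Notation conn Es := (connect (adj Es)).

Definition ends_in Vs Es := {in Es, forall e, ((ends e).1 \in Vs) && ((ends e).2 \in Vs)}.

(* [mg_tree] does not force the ends of the edges to be vertices; adding a
   leaf or exchanging an edge needs this, so it is carried along. *)
Definition wf_tree Vs Es := mg_tree Vs Es ends /\ ends_in Vs Es.

Lemma joinsC e u w : joins e u w = joins e w u.
Proof. by rewrite /joins orbC. Qed.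

Lemma joins_same_ends e u w u' w' : joins e u w -> joins e u' w' ->
  (u' = u /\ w' = w) \/ (u' = w /\ w' = u).
Proof.
by rewrite /joins; case: (ends e) => ? ? /orP[]/eqP[-> ->] /orP[]/eqP[-> ->]; auto.
Qed.

Lemma joins_in Vs Es e u w : ends_in Vs Es -> e \in Es -> joins e u w ->
  (u \in Vs) && (w \in Vs).
Proof.
move=> /[apply]; rewrite /joins; case: (ends e) => ? ? /andP[? ?].
by case/orP=> /eqP[<- <-]; apply/andP.
Qed.

Lemma adjP Es u w : reflect (exists2 e, e \in Es & joins e u w) (adj Es u w).
Proof. by apply: (iffP existsP) => [[e /andP[]]|[e ? ?]]; exists e => //; apply/andP. Qed.

Lemma adjC Es : symmetric (adj Es).
Proof. by move=> u w; apply: eq_existsb => e; rewrite joinsC. Qed.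

Lemma connectC Es : connect_sym (adj Es).
Proof. exact/sym_connect_sym/adjC. Qed.

Lemma connect_subset Es Es' u w : Es \subset Es' -> conn Es u w -> conn Es' u w.
Proof.
move=> sEs; apply: connect_sub u w => u w /adjP[e eE J].
by apply/connect1/adjP; exists e; first exact: subsetP eE.
Qed.

Lemma connect_isolated Es z u :
  (forall e w, e \in Es -> ~ joins e z w) -> conn Es z u -> u = z.
Proof.
move=> isol /connectP[[|w p] //= /andP[/adjP[e eE J] _] _].
by case: (isol e w eE J).
Qed.

Lemma cycle_edge_connect Vs Es es vs e u w : mg_cycle Vs Es ends es vs ->
  e \in es -> joins e u w -> conn ([set x in es] :\ e) u w.
Proof.
case=> /and4P[k_gt0 /eqP size_vs uniq_es _] _ _ joins_i e_es Je.
set k := size es in k_gt0 size_vs joins_i; rewrite -size_vs in joins_i.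
have [m m_lt nth_m] : exists2 m, m < k & nth e es m = e.
  by exists (index e es); rewrite ?index_mem ?nth_index.
pose vtx i := nth u vs (i %% k).
have step i : i %% k != m -> adj ([set x in es] :\ e) (vtx i) (vtx i.+1).
  move=> im; have ik : i %% k < k by rewrite ltn_pmod.
  apply/adjP; exists (nth e es (i %% k)).
    by rewrite !inE mem_nth // andbT -{2}nth_m nth_uniq.
  rewrite /vtx; have -> : i.+1 %% k = (i %% k).+1 %% k by rewrite -[i.+1]addn1 -modnDml addn1.
  exact: joins_i.
(* Walk once around the cycle, starting right after [e]. *)
have walk t : t < k -> conn ([set x in es] :\ e) (vtx m.+1) (vtx (m.+1 + t)).
  elim: t => [|t IHt] lt_tk; first by rewrite addn0.
  rewrite addnS; apply: connect_trans (IHt (ltnW lt_tk)) (connect1 (step _ _)).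
  rewrite addSnnS -{2}(modn_small m_lt) -{2}[m]addn0 eqn_modDl mod0n modn_small //.
have := walk k.-1; rewrite ltn_predL => /(_ k_gt0).
rewrite /vtx addSnnS prednK // modnDr (modn_small m_lt).
have := joins_i m e u m_lt; rewrite nth_m.
by case/(joins_same_ends Je) => -[-> ->] //; rewrite connectC.
Qed.

Lemma path_edges Es a p : path (adj Es) a p ->
  exists2 es, size es = size p /\ {subset es <= Es} &
    forall i e0 v0, i < size p ->
      joins (nth e0 es i) (nth v0 (a :: p) i) (nth v0 (a :: p) i.+1).
Proof.
elim: p a => [|b p IHp] a /=; first by exists [::].
case/andP=> /adjP[e eE Je] /IHp[es [size_es sub_es] joins_i].
exists (e :: es); first by split=> [|h /predU1P[->|/sub_es]] //=; rewrite size_es.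
by case=> [|i] e0 v0 //= /joins_i.
Qed.

Lemma uniq_path_edges e0 v0 es vs :
  uniq vs -> size vs = (size es).+1 ->
  (forall i, i < size es -> joins (nth e0 es i) (nth v0 vs i) (nth v0 vs i.+1)) ->
  uniq es.
Proof.
move=> uniq_vs size_vs joins_i; apply/(uniqP e0) => i j; rewrite !inE => lt_i lt_j eq_ij.
have nth_inj k l : k <= size es -> l <= size es -> nth v0 vs k = nth v0 vs l -> k = l.
  by rewrite -ltnS -[l <= _]ltnS -size_vs => ? ? /eqP; rewrite nth_uniq // => /eqP.
have := joins_i j lt_j; rewrite -eq_ij => /(joins_same_ends (joins_i i lt_i)).
have le_i := ltnW lt_i; have le_j := ltnW lt_j.
case=> -[/nth_inj eq1 /nth_inj eq2]; first by rewrite eq1.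
have := eq2 lt_j le_i; rewrite eq1 // => /eqP.
by rewrite -(addn2 i) -{2}(addn0 i) eqn_add2l.
Qed.

Lemma tree_bridge Vs Es g a b : wf_tree Vs Es -> g \in Es -> joins g a b ->
  ~~ conn (Es :\ g) a b.
Proof.
move=> [[_ _ acyclic] ends_Vs] gE Jg; apply/negP => /connectP[? /shortenP[p pth uniq_ap _]].
move=> b_last; have [es [size_es sub_es] joins_i] := path_edges pth.
have gNes : g \notin es by apply/negP => /sub_es; rewrite !inE eqxx.
(* The path from [a] to [b], closed up by [g], is a cycle. *)
apply: (acyclic (rcons es g) (a :: p)); split.
- rewrite size_rcons size_es eqxx rcons_uniq gNes uniq_ap andbT /=.
  apply: (uniq_path_edges (e0 := g) (v0 := a) uniq_ap) => [|i]; first by rewrite size_es.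
  by rewrite size_es => /joins_i.
- apply/allP => h; rewrite mem_rcons => /predU1P[-> //|/sub_es].
  by rewrite inE => /andP[].
- apply/(all_nthP a) => -[|i] /=; first by case/andP: (joins_in ends_Vs gE Jg).
  rewrite ltnS => lt_ip; have := joins_i i g a lt_ip.
  have /sub_es : nth g es i \in es by rewrite mem_nth ?size_es.
  by rewrite inE => /andP[_ /(joins_in ends_Vs)] /[apply] /andP[].
- move=> i e0 v0; rewrite size_rcons size_es ltnS leq_eqVlt => /predU1P[->|lt_ip].
    rewrite nth_rcons size_es ltnn eqxx modnn /= (set_nth_default a) // nth_last /=.
    by rewrite joinsC -b_last.
  by rewrite nth_rcons size_es lt_ip modn_small ?ltnS //; apply: joins_i.
Qed.

Lemma connect_remove_edge Vs Es g a b u : mg_connected Vs Es ends ->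
  a \in Vs -> u \in Vs -> joins g a b ->
  conn (Es :\ g) u a || conn (Es :\ g) u b.
Proof.
move=> connected aV uV Jg.
pose near_ab := [pred x | conn (Es :\ g) x a || conn (Es :\ g) x b].
have closed_ab : closed (adj Es) near_ab.
  move=> x y /adjP[h hE]; have [-> Jh | ngh Jh] := eqVneq h g.
    by case: (joins_same_ends Jg Jh) => -[-> ->]; rewrite !inE !connect0 !orbT.
  have xy : adj (Es :\ g) x y by apply/adjP; exists h; rewrite // !inE ngh.
  by rewrite !inE !(same_connect1 (connectC _) xy).
by have := closed_connect closed_ab (connected _ _ aV uV); rewrite !inE connect0 => <-.
Qed.

Lemma no_cycle_in_tree_edges Vs Es Vs' Es' es vs : wf_tree Vs Es ->
  mg_cycle Vs' Es' ends es vs -> {subset es <= Es} -> False.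
Proof.
move=> tree cyc sub_es; have [/and4P[k_gt0 _ _ _] _ _ joins_i] := cyc.
case: es k_gt0 joins_i cyc sub_es => // e es' _ /(_ 0 e (ends e).1 isT) /= Je cyc sub_es.
have eE : e \in Es by rewrite sub_es ?mem_head.
case/negP: (tree_bridge tree eE Je).
apply: connect_subset _ (cycle_edge_connect cyc (mem_head _ _) Je).
by apply/subsetP => h; rewrite !inE => /andP[-> /sub_es ->].
Qed.

Lemma wf_tree_set1 u : wf_tree [set u] set0.
Proof.
split; last by move=> e; rewrite in_set0.
split=> [|v w|es vs [/and4P[k_gt0 _ _ _] + _ _]].
- by apply/set0Pn; exists u; rewrite set11.
- by rewrite !inE => /eqP-> /eqP->.
- by case: es k_gt0 => // e es' _ /andP[/[!inE]].
Qed.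

Lemma wf_tree_add_leaf Vs Es f z a : wf_tree Vs Es -> z \notin Vs -> f \notin Es ->
  a \in Vs -> joins f z a -> wf_tree (z |: Vs) (f |: Es).
Proof.
move=> tree zNV fNE aV Jf; have [[_ connected _] ends_Vs] := tree.
have sub_fE : Es \subset f |: Es by apply/subsetP => h hE; rewrite setU1r.
have to_a u : u \in z |: Vs -> conn (f |: Es) u a.
  case/setU1P => [-> | uV]; first by apply/connect1/adjP; exists f; rewrite ?setU11.
  exact: connect_subset sub_fE (connected u a uV aV).
split; [split=> [|u w uV wV|es vs cyc] | ].
- by apply/set0Pn; exists z; rewrite setU11.
- by apply: connect_trans (to_a u uV) _; rewrite connectC to_a.
- have [_ /allP sub_es _ _] := cyc.
  have [f_es | fNes] := boolP (f \in es); last first.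
    apply: no_cycle_in_tree_edges tree cyc _ => h h_es.
    by have /setU1P[eq_hf|] := sub_es h h_es; first by rewrite -eq_hf h_es in fNes.
  have z_isolated e w : e \in Es -> ~ joins e z w.
    by move=> eE /(joins_in ends_Vs eE) /andP[zV _]; rewrite zV in zNV.
  have /(connect_isolated z_isolated) eq_az : conn Es z a.
    apply: connect_subset _ (cycle_edge_connect cyc f_es Jf).
    apply/subsetP => h; rewrite !inE => /andP[nhf /sub_es].
    by rewrite !inE (negbTE nhf).
  by rewrite -eq_az aV in zNV.
- move=> e /setU1P[-> | eE]; last by case/andP: (ends_Vs e eE) => e1 e2; rewrite !setU1r.
  move: Jf; rewrite /joins; case: (ends f) => f1 f2.
  by case/orP=> /eqP[-> ->]; rewrite /= setU11 setU1r.
Qed.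

Lemma wf_tree_exchange Vs Es g f a b c d : wf_tree Vs Es -> g \in Es -> joins g a b ->
  f \notin Es -> joins f c d -> c \in Vs -> d \in Vs ->
  conn (Es :\ g) c a -> conn (Es :\ g) d b -> wf_tree Vs (f |: (Es :\ g)).
Proof.
move=> tree gE Jg fNE Jf cV dV ca db; have [[Vs_n0 connected _] ends_Vs] := tree.
set Es' := f |: (Es :\ g).
have sub_Es' : Es :\ g \subset Es' by apply/subsetP => h hE; rewrite setU1r.
have ab : conn Es' a b.
  have cd : conn Es' c d by apply/connect1/adjP; exists f; rewrite ?setU11.
  rewrite connectC in ca; apply: connect_trans (connect_subset sub_Es' ca) _.
  exact: connect_trans cd (connect_subset sub_Es' db).
have to_a u : u \in Vs -> conn Es' u a.
  have aV : a \in Vs by case/andP: (joins_in ends_Vs gE Jg).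
  move=> /(connect_remove_edge connected aV)/(_ Jg)/orP[] /(connect_subset sub_Es') // ub.
  by apply: connect_trans ub _; rewrite connectC.
split; [split=> // [u w uV wV|es vs cyc] | ].
- by apply: connect_trans (to_a u uV) _; rewrite connectC to_a.
- have [_ /allP sub_es _ _] := cyc.
  have [f_es | fNes] := boolP (f \in es); last first.
    apply: no_cycle_in_tree_edges tree cyc _ => h h_es.
    have /setU1P[eq_hf|] := sub_es h h_es; first by rewrite -eq_hf h_es in fNes.
    by case/setD1P.
  have cd : conn (Es :\ g) c d.
    apply: connect_subset _ (cycle_edge_connect cyc f_es Jf).
    apply/subsetP => h; rewrite !inE => /andP[nhf /sub_es].
    by rewrite !inE (negbTE nhf).
  case/negP: (tree_bridge tree gE Jg).
  by apply: connect_trans (connect_trans cd db); rewrite connectC.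
- move=> e /setU1P[-> | /setD1P[_ eE]]; last exact: ends_Vs.
  move: Jf; rewrite /joins; case: (ends f) => f1 f2.
  by case/orP=> /eqP[-> ->]; apply/andP.
Qed.
End MultigraphTrees.

Lemma all_imset_map (A B : finType) (f : A -> B) (D : {set A}) s :
  all (mem (f @: D)) s -> exists2 s0, s = map f s0 & all (mem D) s0.
Proof.
elim: s => [|y s IHs] /=; first by exists [::].
case/andP=> /imsetP[x xD ->] /IHs[s0 -> s0D]; exists (x :: s0) => //=.
by rewrite xD.
Qed.

Section Transport.
Variables (V Ed V' Ed' : finType) (ends : Ed -> V * V) (ends' : Ed' -> V' * V').
Variables (phi : V -> V') (psi : Ed -> Ed') (Es : {set Ed}).
Hypotheses (phi_inj : injective phi) (psi_inj : injective psi).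
Hypothesis ends_map : {in Es, forall e, ends' (psi e) = (phi (ends e).1, phi (ends e).2)}.

Lemma joins_map e u w : e \in Es -> joins ends' (psi e) (phi u) (phi w) = joins ends e u w.
Proof.
move=> eE; rewrite /joins ends_map //; case: (ends e) => ? ?.
by rewrite !xpair_eqE !(inj_eq phi_inj).
Qed.

Lemma connect_map (E : {set Ed}) u w : E \subset Es ->
  connect (adj E ends) u w -> connect (adj (psi @: E) ends') (phi u) (phi w).
Proof.
move=> sub_E /connectP[p pth ->]; apply/connectP.
exists (map phi p); last by rewrite last_map.
rewrite path_map; apply: sub_path pth => x y /adjP[e eE Je] /=.
by apply/adjP; exists (psi e); rewrite ?imset_f ?joins_map ?(subsetP sub_E).
Qed.

Lemma wf_tree_map Vs : wf_tree ends Vs Es -> wf_tree ends' (phi @: Vs) (psi @: Es).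
Proof.
move=> [[/set0Pn[v vV] connected acyclic] ends_Vs].
split; [split=> [|_ _ /imsetP[u uV ->] /imsetP[w wV ->]|es' vs' cyc] | ].
- by apply/set0Pn; exists (phi v); rewrite imset_f.
- exact/connect_map/connected.
- case: cyc => /and4P[k_gt0 /eqP size_vs uniq_es uniq_vs] es'E vs'V joins_i.
  have [es ? esE] := all_imset_map es'E; have [vs ? vsV] := all_imset_map vs'V.
  subst es' vs'.
  apply: (acyclic es vs); split=> //.
    move: k_gt0 size_vs uniq_es uniq_vs.
    rewrite !size_map (map_inj_uniq psi_inj) (map_inj_uniq phi_inj).
    by move=> -> -> -> ->; rewrite eqxx.
  move: size_vs joins_i; rewrite !size_map => size_vs joins_i i e0 v0 lt_ik.
  have lt_ivs : i < size vs by rewrite -size_vs.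
  have lt_jvs : i.+1 %% size vs < size vs by rewrite ltn_pmod // (leq_ltn_trans _ lt_ivs).
  have := joins_i i (psi e0) (phi v0) lt_ik; rewrite !(nth_map e0, nth_map v0) // joins_map //.
  exact: (allP esE) (mem_nth _ _).
- move=> _ /imsetP[e eE ->]; rewrite ends_map //=.
  by case/andP: (ends_Vs e eE) => u1 u2; rewrite !imset_f.
Qed.

End Transport.

(** * Smallest clades *)

Lemma cards2_gt1 (T : finType) (a b : T) : a != b -> 1 < #|[set a; b]|.
Proof. by rewrite cards2 => ->. Qed.

Lemma card_gt1_not_sub1 (T : finType) (S : {set T}) x : 1 < #|S| -> ~~ (S \subset [set x]).
Proof. by move=> S_gt1; apply/negP => /subset_leq_card; rewrite cards1 leqNgt S_gt1. Qed.

Section SmallestIn.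
Variable T : finType.
Implicit Types (K : {set {set T}}) (S C D X : {set T}).

Definition smallest_in K S C :=
  [/\ C \in K, S \subset C & forall D, D \in K -> S \subset D -> C \subset D].

Lemma smallest_in_setU1 K S C X :
  ~~ (S \subset X) -> smallest_in K S C -> smallest_in (X |: K) S C.
Proof.
move=> SNX [CK SC minC]; split; rewrite ?setU1r //.
by move=> D /setU1P[-> /(negP SNX) | /minC].
Qed.

Lemma smallest_in_set1 K X : smallest_in (X |: K) X X.
Proof. by split; rewrite ?setU11. Qed.

End SmallestIn.

Lemma smallest_in_imset (T T' : finType) (f : {set T} -> {set T'}) (K : {set {set T}})
    (S C : {set T}) (S' : {set T'}) :
  {homo f : A B / A \subset B} -> (forall D : {set T}, (S' \subset f D) = (S \subset D)) ->
  smallest_in K S C -> smallest_in (f @: K) S' (f C).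
Proof.
move=> f_homo sub_f [CK SC minC]; split; [exact: imset_f | by rewrite sub_f |].
by move=> _ /imsetP[D DK ->]; rewrite sub_f => /(minC D DK)/f_homo.
Qed.

Section Clades.
Variable n : nat.
Implicit Types (t : btree n) (S C D : {set 'I_n}).

Definition leafset t : {set 'I_n} := [set z in leaves t].

Lemma leafset_node l r : leafset (BNode l r) = leafset l :|: leafset r.
Proof. by apply/setP => z; rewrite !inE mem_cat. Qed.

Lemma on_leafsetP t : on_leafset t <-> uniq (leaves t) /\ leafset t = setT.
Proof.
split=> [perm_t | [uniq_t all_t]].
  split; first by rewrite (perm_uniq perm_t) enum_uniq.
  by apply/setP => z; rewrite !inE (perm_mem perm_t) mem_enum.
apply: uniq_perm; rewrite ?enum_uniq // => z.
by rewrite mem_enum; have := in_setT z; rewrite -all_t inE.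
Qed.

Lemma cT_unique t S C : smallest_in (clades t) S C -> cT t S = C.
Proof.
case=> CK SC minC; rewrite /cT; case: pickP => [C' /and3P[C'K SC' /forall_inP minC'] | noC] /=.
  by apply/eqP; rewrite eqEsubset minC //= (implyP (minC' C CK)).
case/and3P: (noC C); split=> //; apply/forall_inP => D DK; apply/implyP; exact: minC.
Qed.

Lemma clade_sub_leafset t C : C \in clades t -> C \subset leafset t.
Proof.
elim: t => [y|l IHl r IHr] /=; first by rewrite inE.
rewrite -/(leafset (BNode l r)) leafset_node !inE.
case/orP=> [/orP[/eqP-> // | /IHl sub] | /IHr sub].
  exact: subset_trans sub (subsetUl _ _).
exact: subset_trans sub (subsetUr _ _).
Qed.

Lemma smallest_clade_exists t S : uniq (leaves t) -> 1 < #|S| -> S \subset leafset t ->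
  exists C, smallest_in (clades t) S C.
Proof.
elim: t => [y|l IHl r IHr] uniq_t S_gt1 S_t.
  case/negP: (card_gt1_not_sub1 y S_gt1); apply: subset_trans S_t _.
  by apply/subsetP => z; rewrite !inE.
move: uniq_t; rewrite cat_uniq => /and3P[uniq_l /hasPn disj_lr uniq_r].
have [s sS] : exists s, s \in S by apply/set0Pn; rewrite -card_gt0 ltnW.
have not_both : S \subset leafset l -> S \subset leafset r -> False.
  by move=> /subsetP/(_ s sS) + /subsetP/(_ s sS); rewrite !inE => sl /disj_lr; rewrite sl.
have in_child u D : D \in clades u -> S \subset D -> S \subset leafset u.
  by move=> /clade_sub_leafset sub_Du sub_SD; apply: subset_trans sub_SD sub_Du.
have [Sl | nSl] := boolP (S \subset leafset l).
  have [C [Cl SC minC]] := IHl uniq_l S_gt1 Sl.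
  exists C; split=> [|//|D]; first by rewrite !inE Cl orbT.
  rewrite !inE -/(leafset (BNode l r)) => /orP[/orP[/eqP-> _ | /minC //] | Dr SD].
    by rewrite leafset_node; apply: subset_trans (clade_sub_leafset Cl) (subsetUl _ _).
  by case: (not_both Sl (in_child _ _ Dr SD)).
have [Sr | nSr] := boolP (S \subset leafset r).
  have [C [Cr SC minC]] := IHr uniq_r S_gt1 Sr.
  exists C; split=> [|//|D]; first by rewrite !inE Cr !orbT.
  rewrite !inE -/(leafset (BNode l r)) => /orP[/orP[/eqP-> _ | Dl SD] | /minC //].
    by rewrite leafset_node; apply: subset_trans (clade_sub_leafset Cr) (subsetUr _ _).
  by case: (not_both (in_child _ _ Dl SD) Sr).
exists (leafset (BNode l r)); split=> [|//|D]; first by rewrite !inE eqxx.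
rewrite !inE => /orP[/orP[/eqP-> // | Dl SD] | Dr SD].
  by rewrite (in_child _ _ Dl SD) in nSl.
by rewrite (in_child _ _ Dr SD) in nSr.
Qed.

Lemma cT_smallest t S : on_leafset t -> 1 < #|S| -> smallest_in (clades t) S (cT t S).
Proof.
case/on_leafsetP => uniq_t leafset_t S_gt1.
have S_t : S \subset leafset t by rewrite leafset_t subsetT.
have [C smallest_C] := smallest_clade_exists uniq_t S_gt1 S_t.
by rewrite (cT_unique smallest_C).
Qed.

Lemma cT_clade t S : on_leafset t -> 1 < #|S| -> cT t S \in clades t.
Proof. by move=> on_t S_gt1; case: (cT_smallest on_t S_gt1). Qed.

Lemma leaves_gt0 t : 0 < size (leaves t).
Proof. by elim: t => //= l IHl r _; rewrite size_cat addn_gt0 IHl. Qed.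

Lemma card_clade t C : uniq (leaves t) -> C \in clades t -> 1 < #|C|.
Proof.
elim: t => [y|l IHl r IHr] uniq_t /=; first by rewrite inE.
move: (uniq_t); rewrite cat_uniq => /and3P[uniq_l _ uniq_r].
rewrite !inE => /orP[/orP[/eqP-> | /IHl-> //] | /IHr-> //].
move/card_uniqP: uniq_t; rewrite cardsE => ->.
by rewrite size_cat; exact: (leq_add (leaves_gt0 l) (leaves_gt0 r)).
Qed.

Lemma set1_notin_clades t x : on_leafset t -> [set x] \notin clades t.
Proof. by case/on_leafsetP => uniq_t _; apply/negP => /(card_clade uniq_t); rewrite cards1. Qed.

End Clades.

(** * Attaching a new leaf *)

Section Insertion.
Variable n : nat.
Implicit Types (t : btree n) (x y w : 'I_n) (S C D e : {set 'I_n}).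

Lemma emb_lift y : emb y = lift ord_max y.
Proof. by apply: val_inj; rewrite /= /bump leqNgt ltn_ord. Qed.

Lemma emb_inj : injective (@emb n).
Proof. by move=> y1 y2; rewrite !emb_lift => /lift_inj. Qed.

Lemma emb_neq_max y : (emb y == ord_max) = false.
Proof. by rewrite emb_lift eq_sym (negbTE (neq_lift _ _)). Qed.

Variant emb_spec : 'I_n.+1 -> Type :=
  | EmbMax : emb_spec ord_max
  | EmbOld y : emb_spec (emb y).

Lemma embP z : emb_spec z.
Proof. by case: (unliftP ord_max z) => [y ->|->]; [rewrite -emb_lift|]; constructor. Qed.

(* [collapse x] undoes [ins x]: it sends the new leaf [ord_max] to [x]. *)
Definition collapse x (z : 'I_n.+1) : 'I_n := if unlift ord_max z is Some y then y else x.

Lemma collapse_emb x y : collapse x (emb y) = y.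
Proof. by rewrite /collapse emb_lift liftK. Qed.

Lemma collapse_max x : collapse x ord_max = x.
Proof. by rewrite /collapse unlift_none. Qed.

Definition lift_clade x C : {set 'I_n.+1} := collapse x @^-1: C.

Definition lift_edge e : {set 'I_n.+1} := [set emb z | z in e].

Lemma lift_clade_inj x : injective (lift_clade x).
Proof.
move=> C D eq_CD; apply/setP => y.
by move/setP/(_ (emb y)): eq_CD; rewrite !inE !collapse_emb.
Qed.

Lemma sub_lift_clade x (S' : {set 'I_n.+1}) D :
  (S' \subset lift_clade x D) = (collapse x @: S' \subset D).
Proof. by rewrite sub_imset_pre. Qed.

Lemma collapse_lift_edge x e : collapse x @: lift_edge e = e.
Proof. by rewrite -imset_comp (eq_imset _ (collapse_emb x)) imset_id. Qed.

Lemma collapse_new_edge x w : collapse x @: [set ord_max; emb w] = [set x; w].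
Proof. by rewrite imsetU1 imset_set1 collapse_max collapse_emb. Qed.

Fixpoint ins x t : btree n.+1 :=
  match t with
  | BLeaf y => if y == x then BNode (BLeaf (emb y)) (BLeaf ord_max) else BLeaf (emb y)
  | BNode l r => BNode (ins x l) (ins x r)
  end.

Lemma leafset_ins x t : leafset (ins x t) = lift_clade x (leafset t).
Proof.
elim: t => [y|l IHl r IHr]; last by rewrite /= !leafset_node IHl IHr /lift_clade preimsetU.
apply/setP => z; rewrite /= !inE; case: eqP => [<-|/eqP nyx] /=;
  case: z / embP => [|z]; rewrite !inE ?collapse_max ?collapse_emb ?(inj_eq emb_inj) //.
- by rewrite !eqxx orbT.
- by rewrite emb_neq_max orbF.
- by rewrite eq_sym emb_neq_max eq_sym (negbTE nyx).
Qed.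

Lemma mem_leaves_ins x t z : (z \in leaves (ins x t)) = (collapse x z \in leaves t).
Proof. by move/setP/(_ z): (leafset_ins x t); rewrite !inE. Qed.

Lemma uniq_leaves_ins x t : uniq (leaves t) -> uniq (leaves (ins x t)).
Proof.
elim: t => [y|l IHl r IHr] /=; first by case: eqP => //= _; rewrite inE emb_neq_max.
rewrite !cat_uniq => /and3P[/IHl-> /hasPn disj_lr /IHr->]; rewrite andbT /=.
by apply/hasPn => z; rewrite !mem_leaves_ins => /disj_lr.
Qed.

Lemma on_leafset_ins x t : on_leafset t -> on_leafset (ins x t).
Proof.
case/on_leafsetP => uniq_t leafset_t; apply/on_leafsetP.
by rewrite uniq_leaves_ins // leafset_ins leafset_t /lift_clade preimsetT.
Qed.

Lemma clades_ins x t : clades (ins x t) =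
  lift_clade x @: clades t :|: (if x \in leaves t then [set lift_clade x [set x]] else set0).
Proof.
elim: t => [y|l IHl r IHr].
  have leafset_x : leafset (BLeaf x) = [set x] by apply/setP => z; rewrite !inE.
  rewrite imset0 set0U inE eq_sym /=; case: eqP => [-> | _] /=; rewrite ?setU0 //.
  by rewrite -leafset_x -leafset_ins /= eqxx.
rewrite [ins x _]/= [clades (BNode _ _)]/= -/(leafset (ins x (BNode l r))) leafset_ins.
rewrite IHl IHr [clades (BNode l r)]/= -/(leafset (BNode l r)) !imsetU imset_set1 mem_cat.
rewrite -[in LHS]setUA setUACA -!setUA; do 3!congr (_ :|: _).
by case: (x \in leaves l); case: (x \in leaves r); rewrite ?setU0 ?set0U ?setUid.
Qed.

Lemma clades_ins_on x t : on_leafset t ->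
  clades (ins x t) = lift_clade x @: ([set x] |: clades t).
Proof.
case/on_leafsetP => _ leafset_t; have := in_setT x; rewrite -leafset_t inE.
by rewrite clades_ins imsetU1 setUC => ->.
Qed.

Lemma lift_edge_inj : injective lift_edge.
Proof. exact: imset_inj emb_inj. Qed.

Lemma lift_edges_setD1 (E : {set {set 'I_n}}) e :
  lift_edges (E :\ e) = lift_edges E :\ lift_edge e.
Proof.
apply/setP => f; rewrite in_setD1.
apply/imsetP/andP => [[e' /setD1P[ne'e e'E] ->] | [nfe /imsetP[e' e'E eq_f]]].
  by rewrite (inj_eq lift_edge_inj) ne'e imset_f.
by exists e' => //; rewrite !inE e'E andbT; apply: contra nfe => /eqP eq_e'; rewrite eq_f eq_e'.
Qed.

Lemma max_edge_notin_lift (E : {set {set 'I_n}}) w : [set ord_max; emb w] \notin lift_edges E.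
Proof.
apply/imsetP => -[e _ /setP/(_ ord_max)]; rewrite !inE eqxx /=.
by case: imsetP => // -[z _ /eqP]; rewrite eq_sym emb_neq_max.
Qed.

Lemma max_edge_eq v w : ([set ord_max; emb v] == [set ord_max; emb w]) = (v == w).
Proof.
apply/eqP/eqP => [/setP/(_ (emb v)) | -> //]; rewrite !inE eqxx orbT emb_neq_max.
by move/esym/eqP/emb_inj.
Qed.

Lemma cT_ins x t (S' : {set 'I_n.+1}) C : on_leafset t ->
  smallest_in ([set x] |: clades t) (collapse x @: S') C -> cT (ins x t) S' = lift_clade x C.
Proof.
move=> on_t smallest_C; apply: cT_unique; rewrite clades_ins_on //.
apply: smallest_in_imset smallest_C => [A B | D]; first exact: preimsetS.
exact: sub_lift_clade.
Qed.

Lemma cT_ins_lift x t e : on_leafset t -> 1 < #|e| ->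
  cT (ins x t) (lift_edge e) = lift_clade x (cT t e).
Proof.
move=> on_t e_gt1; apply: cT_ins; rewrite // collapse_lift_edge.
exact: smallest_in_setU1 (card_gt1_not_sub1 x e_gt1) (cT_smallest on_t e_gt1).
Qed.

Lemma cT_ins_new x t w : on_leafset t -> w != x ->
  cT (ins x t) [set ord_max; emb w] = lift_clade x (cT t [set x; w]).
Proof.
move=> on_t nwx; have xw_gt1 : 1 < #|[set x; w]| by rewrite cards2_gt1 // eq_sym.
apply: cT_ins; rewrite // collapse_new_edge.
exact: smallest_in_setU1 (card_gt1_not_sub1 x xw_gt1) (cT_smallest on_t xw_gt1).
Qed.

Lemma cT_ins_self x t : on_leafset t ->
  cT (ins x t) [set ord_max; emb x] = lift_clade x [set x].
Proof.
by move=> on_t; apply: cT_ins; rewrite // collapse_new_edge setUid; apply: smallest_in_set1.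
Qed.

End Insertion.

(** * Relabelling leaves *)

Lemma imset_subsetE (A B : finType) (f : A -> B) (S D : {set A}) :
  injective f -> (f @: S \subset f @: D) = (S \subset D).
Proof.
move=> f_inj; apply/idP/idP => [/subsetP sub_fSD | /imsetS //]; apply/subsetP => z zS.
by rewrite -(mem_imset _ _ f_inj) sub_fSD ?imset_f.
Qed.

Section Relabel.
Variables (n : nat) (s : {perm 'I_n}).
Implicit Types (t : btree n) (S : {set 'I_n}).

Fixpoint relab t : btree n :=
  match t with
  | BLeaf y => BLeaf (s y)
  | BNode l r => BNode (relab l) (relab r)
  end.

Lemma leaves_relab t : leaves (relab t) = map s (leaves t).
Proof. by elim: t => //= l -> r ->; rewrite map_cat. Qed.

Lemma leafset_relab t : leafset (relab t) = s @: leafset t.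
Proof.
apply/setP => z; rewrite inE leaves_relab -[z](permKV s).
by rewrite (mem_map perm_inj) (mem_imset _ _ perm_inj) inE.
Qed.

Lemma clades_relab t : clades (relab t) = [set s @: C | C : {set 'I_n} in clades t].
Proof.
elim: t => [y|l IHl r IHr] /=; first by rewrite imset0.
by rewrite -/(leafset (relab (BNode l r))) leafset_relab IHl IHr !imsetU imset_set1.
Qed.

Lemma on_leafset_relab t : on_leafset t -> on_leafset (relab t).
Proof.
case/on_leafsetP => uniq_t leafset_t; apply/on_leafsetP.
rewrite leaves_relab (map_inj_uniq perm_inj) uniq_t leafset_relab leafset_t.
split=> //; apply/setP => z; by rewrite in_setT -[z](permKV s) imset_f ?in_setT.
Qed.

Lemma cT_relab t S : on_leafset t -> 1 < #|S| -> cT (relab t) (s @: S) = s @: cT t S.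
Proof.
move=> on_t S_gt1; apply: cT_unique; rewrite clades_relab.
apply: smallest_in_imset (cT_smallest on_t S_gt1) => [A B | D]; first exact: imsetS.
exact: imset_subsetE perm_inj.
Qed.

End Relabel.

(** * Restricted clade graphs *)

Definition map_sum (A B : Type) (f1 f2 : A -> B) (v : A + A) : B + B :=
  match v with inl a => inl (f1 a) | inr a => inr (f2 a) end.

Lemma map_sum_inj (A B : Type) (f1 f2 : A -> B) :
  injective f1 -> injective f2 -> injective (map_sum f1 f2).
Proof. by move=> f1_inj f2_inj [a|a] [b|b] //= [] => [/f1_inj|/f2_inj] ->. Qed.

Definition clade_tree_pair n (H : {set {set 'I_n}}) (t1 t2 : btree n) :=
  [/\ on_leafset t1, on_leafset t2 & wf_tree (clade_ends t1 t2) (clade_vertices t1 t2) H].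

Definition nontrivial_edges n (H : {set {set 'I_n}}) := {in H, forall e : {set 'I_n}, 1 < #|e|}.

Section CladeGraph.
Variable n : nat.
Implicit Types (t : btree n) (H : {set {set 'I_n}}) (C : {set 'I_n}).

Lemma inl_clade_vertices t1 t2 C : (inl C \in clade_vertices t1 t2) = (C \in clades t1).
Proof.
rewrite in_setU (mem_imset _ _ (@inl_inj _ _)).
by case: imsetP => [[D _ //]|_]; rewrite orbF.
Qed.

Lemma inr_clade_vertices t1 t2 C : (inr C \in clade_vertices t1 t2) = (C \in clades t2).
Proof. by rewrite in_setU (mem_imset _ _ (@inr_inj _ _)); case: imsetP => // -[D _]. Qed.

Lemma inl_cT_vertex t1 t2 v w : on_leafset t1 -> v != w ->
  inl (cT t1 [set v; w]) \in clade_vertices t1 t2.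
Proof. by move=> on_t1 nvw; rewrite inl_clade_vertices cT_clade ?cards2_gt1. Qed.

Lemma inr_cT_vertex t1 t2 v w : on_leafset t2 -> v != w ->
  inr (cT t2 [set v; w]) \in clade_vertices t1 t2.
Proof. by move=> on_t2 nvw; rewrite inr_clade_vertices cT_clade ?cards2_gt1. Qed.

Lemma imset_clade_vertices m (f1 f2 : {set 'I_n} -> {set 'I_m}) t1 t2 :
  map_sum f1 f2 @: clade_vertices t1 t2 = inl @: (f1 @: clades t1) :|: inr @: (f2 @: clades t2).
Proof. by rewrite imsetU -!imset_comp. Qed.

Lemma clade_tree_pair_relab H (s : {perm 'I_n}) t1 t2 :
  nontrivial_edges H -> clade_tree_pair H t1 t2 ->
  clade_tree_pair [set [set s x | x in (e : {set 'I_n})] | e in H] (relab s t1) (relab s t2).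
Proof.
move=> H_gt1 [on_t1 on_t2 tree]; split; try exact: on_leafset_relab.
have s_inj : injective (fun C : {set 'I_n} => s @: C) := imset_inj perm_inj.
rewrite /clade_vertices !clades_relab -imset_clade_vertices.
apply: (wf_tree_map (ends' := clade_ends _ _) (map_sum_inj s_inj s_inj) s_inj _ tree).
by move=> e /H_gt1 e_gt1; rewrite /clade_ends /= !cT_relab.
Qed.

Section InsertionMoves.
Variables (t1 t2 : btree n) (x y : 'I_n).
Hypotheses (on_t1 : on_leafset t1) (on_t2 : on_leafset t2).

Local Notation lift_vertex := (map_sum (lift_clade x) (lift_clade y)).
Local Notation ends' := (clade_ends (ins x t1) (ins y t2)).

Lemma clade_vertices_ins : clade_vertices (ins x t1) (ins y t2) =
  inl (lift_clade x [set x]) |: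
    (inr (lift_clade y [set y]) |: lift_vertex @: clade_vertices t1 t2).
Proof.
rewrite imset_clade_vertices /clade_vertices !clades_ins_on // !imsetU1.
by rewrite -setUA; congr (_ |: _); rewrite setUCA.
Qed.

Lemma lift_vertex_inj : injective lift_vertex.
Proof. exact: map_sum_inj (@lift_clade_inj n x) (@lift_clade_inj n y). Qed.

Lemma clade_ends_ins_lift H : nontrivial_edges H ->
  {in H, forall e, ends' (lift_edge e) =
    (lift_vertex (clade_ends t1 t2 e).1, lift_vertex (clade_ends t1 t2 e).2)}.
Proof. by move=> H_gt1 e /H_gt1 e_gt1; rewrite /clade_ends /= !cT_ins_lift. Qed.

Lemma wf_tree_ins_lift H : nontrivial_edges H ->
  wf_tree (clade_ends t1 t2) (clade_vertices t1 t2) H ->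
  wf_tree ends' (lift_vertex @: clade_vertices t1 t2) (lift_edges H).
Proof.
move=> H_gt1; apply: (wf_tree_map lift_vertex_inj (@lift_edge_inj n)).
exact: clade_ends_ins_lift.
Qed.

Lemma wf_tree_ins_pendants E : x != y ->
  wf_tree ends' (lift_vertex @: clade_vertices t1 t2) E ->
  [set ord_max; emb x] \notin E -> [set ord_max; emb y] \notin E ->
  wf_tree ends' (clade_vertices (ins x t1) (ins y t2))
    ([set ord_max; emb x] |: ([set ord_max; emb y] |: E)).
Proof.
move=> nxy tree xNE yNE; have nyx : y != x by rewrite eq_sym.
rewrite clade_vertices_ins.
apply: (wf_tree_add_leaf (a := lift_vertex (inr (cT t2 [set y; x])))).
- apply: (wf_tree_add_leaf (a := lift_vertex (inl (cT t1 [set x; y])))) tree _ yNE _ _.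
  + rewrite -[inr _]/(lift_vertex (inr [set y])) (mem_imset _ _ lift_vertex_inj).
    by rewrite inr_clade_vertices set1_notin_clades.
  + by rewrite imset_f // inl_cT_vertex.
  + by rewrite /joins /clade_ends cT_ins_self // cT_ins_new // eqxx orbT.
- rewrite in_setU1 negb_or -[inl _]/(lift_vertex (inl [set x])) (mem_imset _ _ lift_vertex_inj).
  by rewrite inl_clade_vertices set1_notin_clades.
- by rewrite in_setU1 negb_or max_edge_eq nxy.
- by rewrite setU1r // imset_f // inr_cT_vertex.
- by rewrite /joins /clade_ends cT_ins_self // cT_ins_new // eqxx.
Qed.

Lemma clade_tree_pair_add_vertex H : nontrivial_edges H -> x != y ->
  wf_tree (clade_ends t1 t2) (clade_vertices t1 t2) H ->
  clade_tree_pair (lift_edges H :|: [set [set ord_max; emb x]; [set ord_max; emb y]])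
    (ins x t1) (ins y t2).
Proof.
move=> H_gt1 nxy tree; split; try exact: on_leafset_ins.
rewrite setUC -setUA.
by apply: wf_tree_ins_pendants (wf_tree_ins_lift H_gt1 tree) _ _; rewrite ?max_edge_notin_lift.
Qed.

Lemma clade_tree_pair_split_edge H e a b w : nontrivial_edges H -> x != y -> w != x -> w != y ->
  wf_tree (clade_ends t1 t2) (clade_vertices t1 t2) H -> e \in H ->
  joins (clade_ends t1 t2) e a b ->
  connect (adj (H :\ e) (clade_ends t1 t2)) (inl (cT t1 [set x; w])) a ->
  connect (adj (H :\ e) (clade_ends t1 t2)) (inr (cT t2 [set y; w])) b ->
  clade_tree_pair (lift_edges (H :\ e) :|:
      [set [set ord_max; emb x]; [set ord_max; emb y]; [set ord_max; emb w]])
    (ins x t1) (ins y t2).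
Proof.
move=> H_gt1 nxy nwx nwy tree eH Je ca db; split; try exact: on_leafset_ins.
have ends_lift := clade_ends_ins_lift H_gt1.
have lift_connect v v' : connect (adj (H :\ e) (clade_ends t1 t2)) v v' ->
    connect (adj (lift_edges H :\ lift_edge e) ends') (lift_vertex v) (lift_vertex v').
  by rewrite -lift_edges_setD1; apply: (connect_map lift_vertex_inj ends_lift); apply: subD1set.
rewrite lift_edges_setD1 setUC -!setUA.
have new_edge v : v != w ->
    [set ord_max; emb v] \notin [set ord_max; emb w] |: (lift_edges H :\ lift_edge e).
  move=> nvw; rewrite in_setU1 max_edge_eq (negbTE nvw) in_setD1.
  by rewrite (negbTE (max_edge_notin_lift _ _)) andbF.
have nxw : x != w by rewrite eq_sym.
have nyw : y != w by rewrite eq_sym.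
apply: wf_tree_ins_pendants; rewrite ?new_edge //.
apply: wf_tree_exchange (wf_tree_ins_lift H_gt1 tree) (imset_f _ eH) _ _ _ _ _
  (lift_connect _ _ ca) (lift_connect _ _ db).
- by rewrite (joins_map lift_vertex_inj ends_lift).
- exact: max_edge_notin_lift.
- by rewrite /joins /clade_ends !cT_ins_new // eqxx.
- by rewrite imset_f // inl_cT_vertex.
- by rewrite imset_f // inr_cT_vertex.
Qed.

End InsertionMoves.

End CladeGraph.

(** * Henneberg graphs *)

Lemma set3_rev (T : finType) (a b c : T) : [set a; b; c] = [set c; b; a].
Proof. by apply/setP => v; rewrite !inE; case: (v == a); case: (v == b); case: (v == c). Qed.

Lemma set3_swap23 (T : finType) (a b c : T) : [set a; b; c] = [set a; c; b].
Proof. by apply/setP => v; rewrite !inE; case: (v == a); case: (v == b); case: (v == c). Qed.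

Lemma henneberg_nontrivial n (H : {set {set 'I_n}}) : henneberg H -> nontrivial_edges H.
Proof.
have new_gt1 m (v : 'I_m) : 1 < #|[set ord_max; emb v]| by rewrite cards2 eq_sym emb_neq_max.
have lift_gt1 m (E : {set {set 'I_m}}) : nontrivial_edges E -> nontrivial_edges (lift_edges E).
  by move=> E_gt1 _ /imsetP[e /E_gt1 e_gt1 ->]; rewrite card_imset //; apply: emb_inj.
elim=> {n H} [|n H s _ H_gt1|n H i j _ H_gt1 _|n H i j k _ H_gt1 _ _ _] e.
- by rewrite inE => /eqP->; rewrite cards2.
- by case/imsetP=> e' /H_gt1 e'_gt1 ->; rewrite card_imset //; apply: perm_inj.
- by case/setUP => [/(lift_gt1 _ _ H_gt1 e) | /set2P[]->] //; rewrite new_gt1.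
- case/setUP => [eH | ]; last by case/setUP => [/set2P[]|/set1P] ->; rewrite new_gt1.
  by apply: (lift_gt1 _ _ _ e eH) => f /setD1P[_ /H_gt1].
Qed.

Definition cherry : btree 2 := BNode (BLeaf ord0) (BLeaf ord_max).

Lemma clade_tree_pair_K2 : clade_tree_pair [set [set ord0; ord_max]] cherry cherry.
Proof.
have on_cherry : on_leafset cherry.
  by apply/on_leafsetP; split=> //; apply/setP => -[[|[|//]] ?]; rewrite !inE.
set R := leafset cherry.
have clades_cherry : clades cherry = [set R] by rewrite /= !setU0.
have cT_edge : cT cherry [set ord0; ord_max] = R.
  apply: cT_unique; rewrite clades_cherry; split; rewrite ?set11 //.
    by apply/subsetP => z; rewrite !inE.
  by move=> D /set1P->.
split=> //; rewrite /clade_vertices clades_cherry !imset_set1 setUC.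
rewrite -(setU0 [set [set ord0; ord_max]]).
apply: wf_tree_add_leaf (wf_tree_set1 _ (inl R)) _ _ _ _; rewrite ?inE //.
by rewrite /joins /clade_ends cT_edge eqxx orbT.
Qed.

Lemma exists_clade_tree_pair_split_edge n (H : {set {set 'I_n}}) t1 t2 i j k :
  nontrivial_edges H -> clade_tree_pair H t1 t2 -> [set i; j] \in H -> k != i -> k != j ->
  exists t1' t2', clade_tree_pair (lift_edges (H :\ [set i; j]) :|:
    [set [set ord_max; emb i]; [set ord_max; emb j]; [set ord_max; emb k]]) t1' t2'.
Proof.
move=> H_gt1 [on_t1 on_t2 tree] ijH nki nkj.
have nij : i != j by have := H_gt1 _ ijH; rewrite cards2; case: (i != j).
pose a : {set 'I_n} + {set 'I_n} := inl (cT t1 [set i; j]).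
pose b : {set 'I_n} + {set 'I_n} := inr (cT t2 [set i; j]).
have Jab : joins (clade_ends t1 t2) [set i; j] a b by rewrite /joins eqxx.
have aV : a \in clade_vertices t1 t2 by apply: inl_cT_vertex.
have [[_ connected _] _] := tree.
have near_ab v := connect_remove_edge connected aV v Jab.
have nik : i != k by rewrite eq_sym.
have njk : j != k by rewrite eq_sym.
have nji : j != i by rewrite eq_sym.
(* Removing [[set i; j]] separates [a] from [b]; attach the new leaf so that
   its edge to the third neighbour joins the two sides. *)
have [Pa | Pb] := orP (near_ab _ (inl_cT_vertex _ on_t1 nik)).
  exists (ins k t1), (ins j t2); rewrite set3_rev.
  apply: (clade_tree_pair_split_edge on_t1 on_t2 H_gt1 nkj nik nij tree ijH Jab).
    by rewrite [[set k; i]]setUC.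
  by rewrite [[set j; i]]setUC; apply: connect0.
have [Qa | Qb] := orP (near_ab _ (inr_cT_vertex _ on_t2 njk)).
  exists (ins i t1), (ins j t2).
  apply: (clade_tree_pair_split_edge on_t1 on_t2 H_gt1 nij nki nkj tree ijH _ Pb Qa).
  by rewrite joinsC.
exists (ins i t1), (ins k t2); rewrite set3_swap23.
apply: (clade_tree_pair_split_edge on_t1 on_t2 H_gt1 nik nji njk tree ijH Jab (connect0 _ _)).
by rewrite [[set k; j]]setUC.
Qed.

Lemma henneberg_clade_tree_pair n (H : {set {set 'I_n}}) :
  henneberg H -> exists t1 t2, clade_tree_pair H t1 t2.
Proof.
elim=> {n H} [|n H s hen [t1 [t2 pair_t]] | n H i j hen [t1 [t2 [on_t1 on_t2 tree]]] nij
              | n H i j k hen [t1 [t2 pair_t]] ijH nki nkj].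
- by exists cherry, cherry; apply: clade_tree_pair_K2.
- exists (relab s t1), (relab s t2).
  exact: clade_tree_pair_relab (henneberg_nontrivial hen) pair_t.
- exists (ins i t1), (ins j t2).
  exact: (clade_tree_pair_add_vertex on_t1 on_t2 (henneberg_nontrivial hen) nij tree).
- exact: exists_clade_tree_pair_split_edge (henneberg_nontrivial hen) pair_t ijH nki nkj.
Qed.

Unset Implicit Arguments.

Theorem lemma4p6 (n : nat) (H : {set {set 'I_n}}) :
  2 <= n -> henneberg H ->
  exists t1 t2 : btree n,
    [/\ on_leafset t1, on_leafset t2 & restricted_clade_graph_is_tree H t1 t2].
Proof.
(* [2 <= n] follows from [henneberg H]. *)
move=> _ /henneberg_clade_tree_pair[t1 [t2 [on_t1 on_t2 [tree _]]]].
by exists t1, t2.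
Qed.
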